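(* Let $\sigma_1,\sigma_2\subset\mathbb{Q}^n$ be rational polyhedral cones and suppose there is a vector $\mathbf{a}\in\sigma_1\cap\sigma_2$ such that $\mathrm{span}_{\mathbb{Q}}(\sigma_1)\cap\mathrm{span}_{\mathbb{Q}}(\sigma_2)=\mathbb{Q}\mathbf{a}$. Let $\sigma_1\oplus\sigma_2:=\mathrm{pos}_{\mathbb{Q}}(\sigma_1\cup\sigma_2)$. Then $\sigma_1$ and $\sigma_2$ are both strongly convex if and only if $\sigma_1\oplus\sigma_2$ is strongly convex.
   Context: For $B\subset\mathbb{Q}^n$, $\mathrm{span}_{\mathbb{Q}}(B)=\{\sum q_i\mathbf{b}_i: q_i\in\mathbb{Q},\mathbf{b}_i\in B\}$ (finite sums) and $\mathrm{pos}_{\mathbb{Q}}(B)=\{\sum q_i\mathbf{b}_i: q_i\in\mathbb{Q}_{\ge 0},\mathbf{b}_i\in B\}$. A rational polyhedral cone is $\mathrm{pos}_{\mathbb{Q}}(B)$ for a finite $B\subset\mathbb{Q}^n$. A cone $\sigma$ is strongly convex if $\sigma\cap(-\sigma)=\{\mathbf{0}\}$. *)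

From mathcomp Require Import all_boot all_order all_algebra.
Set Implicit Arguments. Unset Strict Implicit. Unset Printing Implicit Defensive.
Import Order.TTheory GRing.Theory Num.Theory.
Local Open Scope ring_scope.

Definition vecQ (n : nat) := 'rV[rat]_n.

Definition spanQ (n : nat) (B : vecQ n -> Prop) : vecQ n -> Prop :=
  fun v => exists (k : nat) (b : 'I_k -> vecQ n) (q : 'I_k -> rat),
    (forall i, B (b i)) /\ v = \sum_(i < k) q i *: b i.

Definition posQ (n : nat) (B : vecQ n -> Prop) : vecQ n -> Prop :=
  fun v => exists (k : nat) (b : 'I_k -> vecQ n) (q : 'I_k -> rat),
    (forall i, B (b i)) /\ (forall i, 0 <= q i) /\ v = \sum_(i < k) q i *: b i.

Definition rational_polyhedral_cone (n : nat) (sigma : vecQ n -> Prop) : Prop :=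
  exists B : seq (vecQ n), forall v, sigma v <-> posQ (fun x => x \in B) v.

Definition strongly_convex (n : nat) (sigma : vecQ n -> Prop) : Prop :=
  forall v, sigma v -> sigma (- v) -> v = 0.

Definition cone_sum (n : nat) (s1 s2 : vecQ n -> Prop) : vecQ n -> Prop :=
  posQ (fun v => s1 v \/ s2 v).

(* Both cones sit inside σ1 ⊕ σ2, so strong convexity passes down.  Conversely,
   σ1 ⊕ σ2 is the Minkowski sum σ1 + σ2, so v, -v ∈ σ1 ⊕ σ2 give x1 + x2 = v and y1 + y2 = -v with
   xi, yi ∈ σi.  Then w := x1 + y1 = -(x2 + y2) lies in both spans, hence w = c a.
   According to the sign of c, either w and c a cancel in σ2 or -w and -c a
   cancel in σ1; either way w = 0, and strong convexity of σ1 and σ2 forces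
   x1 = x2 = 0. *)
From mathcomp Require Import all_boot all_order all_algebra.
Import Order.TTheory GRing.Theory Num.Theory.
Local Open Scope ring_scope.
Set Implicit Arguments. Unset Strict Implicit.

Record convex_cone n (s : vecQ n -> Prop) : Prop := ConvexCone {
  cone0 : s 0;
  coneD : forall x y, s x -> s y -> s (x + y);
  coneZ : forall c x, 0 <= c -> s x -> s (c *: x)
}.

Definition minkowski_sum n (s1 s2 : vecQ n -> Prop) : vecQ n -> Prop :=
  fun v => exists x1 x2, [/\ s1 x1, s2 x2 & v = x1 + x2].

Section PositiveHull.
Variables (n : nat) (P : vecQ n -> Prop).

Lemma posQ_sub x : P x -> posQ P x.
Proof.
move=> Px; exists 1%N, (fun _ => x), (fun _ => 1); split=> //; split=> //.
by rewrite big_ord1 scale1r.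
Qed.

Lemma posQ_convex_cone : convex_cone (posQ P).
Proof.
split.
- exists 0%N, (fun _ => 0), (fun _ => 0).
  by split; [case | split; [case | rewrite big_ord0]].
- move=> _ _ [k1 [b1 [q1 [Pb1 [q1_ge0 ->]]]]] [k2 [b2 [q2 [Pb2 [q2_ge0 ->]]]]].
  pose glue T (f1 : 'I_k1 -> T) (f2 : 'I_k2 -> T) i :=
    match split i with inl j => f1 j | inr j => f2 j end.
  exists (k1 + k2)%N, (glue _ b1 b2), (glue _ q1 q2).
  split; [|split]; try by move=> i; rewrite /glue; case: (split i).
  rewrite big_split_ord /glue; congr (_ + _); apply: eq_bigr => i _.
    by rewrite (unsplitK (inl _ i)).
  by rewrite (unsplitK (inr _ i)).
- move=> c _ c_ge0 [k [b [q [Pb [q_ge0 ->]]]]].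
  exists k, b, (fun i => c * q i); split=> //; split; first by move=> i; rewrite mulr_ge0.
  by rewrite scaler_sumr; apply: eq_bigr => i _; rewrite scalerA.
Qed.

Lemma posQ_min (s : vecQ n -> Prop) :
  convex_cone s -> (forall x, P x -> s x) -> forall v, posQ P v -> s v.
Proof.
move=> [s0 sD sZ] sP _ [k [b [q [Pb [q_ge0 ->]]]]].
by apply: big_ind => // i _; apply: sZ; [exact: q_ge0 | exact/sP/Pb].
Qed.

End PositiveHull.

Lemma rational_polyhedral_cone_convex n (s : vecQ n -> Prop) :
  rational_polyhedral_cone s -> convex_cone s.
Proof.
case=> B sB; have [p0 pD pZ] := posQ_convex_cone (fun x => x \in B).
by split=> [|x y /sB ? /sB ?|c x ? /sB ?]; apply/sB; [exact: p0 | exact: pD | exact: pZ].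
Qed.

Lemma spanQ_scale n (s : vecQ n -> Prop) c x : s x -> spanQ s (c *: x).
Proof.
by move=> sx; exists 1%N, (fun _ => x), (fun _ => c); split=> //; rewrite big_ord1.
Qed.

Lemma strongly_convex_sub n (s t : vecQ n -> Prop) :
  (forall v, s v -> t v) -> strongly_convex t -> strongly_convex s.
Proof. by move=> st sct v /st tv /st; apply: sct. Qed.

Lemma strongly_convex_addr_eq0 n (s : vecQ n -> Prop) x y :
  strongly_convex s -> s x -> s y -> x + y = 0 -> x = 0.
Proof.
move=> sc sx sy /eqP; rewrite addr_eq0 => /eqP xE.
by apply: sc => //; rewrite xE opprK.
Qed.

Section ConeSum.
Variables (n : nat) (s1 s2 : vecQ n -> Prop).
Hypotheses (cone1 : convex_cone s1) (cone2 : convex_cone s2).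

Lemma minkowski_sum_convex_cone : convex_cone (minkowski_sum s1 s2).
Proof.
split.
- by exists 0, 0; split; [exact: cone0 | exact: cone0 | rewrite addr0].
- move=> _ _ [x1 [x2 [sx1 sx2 ->]]] [y1 [y2 [sy1 sy2 ->]]].
  by exists (x1 + y1), (x2 + y2); split; [exact: coneD | exact: coneD | rewrite addrACA].
- move=> c _ c_ge0 [x1 [x2 [sx1 sx2 ->]]].
  by exists (c *: x1), (c *: x2); split; [exact: coneZ | exact: coneZ | rewrite scalerDr].
Qed.

Lemma cone_sum_minkowski v : cone_sum s1 s2 v -> minkowski_sum s1 s2 v.
Proof.
apply: posQ_min minkowski_sum_convex_cone _ v => x [s1x | s2x].
  by exists x, 0; split=> //; [exact: cone0 | rewrite addr0].
by exists 0, x; split=> //; [exact: cone0 | rewrite add0r].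
Qed.

Lemma strongly_convex_cone_sum (a : vecQ n) :
  s1 a -> s2 a ->
  (forall v, spanQ s1 v -> spanQ s2 v -> exists c : rat, v = c *: a) ->
  strongly_convex s1 -> strongly_convex s2 -> strongly_convex (cone_sum s1 s2).
Proof.
move=> s1a s2a span_line sc1 sc2 v /cone_sum_minkowski [x1 [x2 [sx1 sx2 ->]]].
move=> /cone_sum_minkowski [y1 [y2 [sy1 sy2 sumE]]].
have s1w : s1 (x1 + y1) by exact: coneD.
have s2w' : s2 (x2 + y2) by exact: coneD.
have wE : x2 + y2 = - (x1 + y1).
  by apply/eqP; rewrite -addr_eq0 addrC addrACA -sumE subrr.
have [c wc] : exists c : rat, x1 + y1 = c *: a.
  apply: span_line; first by rewrite -[x1 + y1]scale1r; exact: spanQ_scale.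
  by rewrite -[x1 + y1]opprK -wE -scaleN1r; exact: spanQ_scale.
have w0 : x1 + y1 = 0.
  have [c_ge0 | c_lt0] := lerP 0 c.
    apply/eqP; rewrite -oppr_eq0 -wE; apply/eqP.
    apply: (strongly_convex_addr_eq0 sc2 s2w' (coneZ cone2 c_ge0 s2a)).
    by rewrite wE wc addNr.
  have s1ca : s1 (- c *: a) by apply: coneZ => //; rewrite oppr_ge0 ltW.
  apply: (strongly_convex_addr_eq0 sc1 s1w s1ca).
  by rewrite wc scaleNr subrr.
have x1_0 : x1 = 0 by exact: (strongly_convex_addr_eq0 sc1 sx1 sy1).
have x2_0 : x2 = 0 by apply: (strongly_convex_addr_eq0 sc2 sx2 sy2); rewrite wE w0 oppr0.
by rewrite x1_0 x2_0 addr0.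
Qed.

End ConeSum.

Theorem proposition2p2 (n : nat) (s1 s2 : 'rV[rat]_n -> Prop) (a : 'rV[rat]_n) :
  rational_polyhedral_cone s1 -> rational_polyhedral_cone s2 ->
  s1 a -> s2 a ->
  (forall v, (spanQ s1 v /\ spanQ s2 v) <-> exists c : rat, v = c *: a) ->
  ((strongly_convex s1 /\ strongly_convex s2) <-> strongly_convex (cone_sum s1 s2)).
Proof.
move=> /rational_polyhedral_cone_convex cone1 /rational_polyhedral_cone_convex cone2.
move=> s1a s2a span_cap; split.
  case; apply: (strongly_convex_cone_sum cone1 cone2 s1a s2a) => v s1v s2v.
  exact/span_cap.
by move=> sc; split; apply: strongly_convex_sub sc => v sv; apply: posQ_sub; auto.
Qed.
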